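(* Let $d=4$ and $G=\{(1),(12)(34),(13)(24),(14)(23)\}\le S_4$. Then $Aut_0(T_{4;G})\cong S_3\times S_6$. More precisely: $T_{(4;G)}$ and $T_{(3,1);G}$ are singletons; $T_{(2^2);G}$ and $T_{(2,1^2);G}$ each have three elements; $T_{(1^4);G}$ has six elements; every element of $Aut_0(T_{4;G})$ permutes the three elements of $T_{(2^2);G}$ and correspondingly the three elements of $T_{(2,1^2);G}$ (each $(2^2)$-orbit lying above exactly one $(2,1^2)$-orbit), and the $S_3$ factor consists of these simultaneous permutations, while the $S_6$ factor consists of all permutations of the six elements of $T_{(1^4);G}$.
   Context: For $\lambda=(\lambda_1\ge\dots\ge\lambda_k>0)$ a partition of $d$, a tabloid of shape $\lambda$ is a sequence $A=(A_1,\dots,A_k)$ of pairwise disjoint subsets of $\{1,\dots,d\}$ with $|A_i|=\lambda_i$; $T_\lambda$ is their set and $T_d$ the union over all partitions. $S_d$ acts by $\zeta A=(\zeta(A_1),\dots,\zeta(A_k))$. $T_d$ is partially ordered by: $A\le B$ iff $A_1\cup\dots\cup A_i\subseteq B_1\cup\dots\cup B_i$ for all $i\ge1$ (missing rows taken empty). For $G\le S_d$, $T_{\lambda;G}$ is the set of $G$-orbits in $T_\lambda$, $T_{d;G}$ the set of all $G$-orbits in $T_d$, partially ordered by $a\le b$ iff there are $A\in a$, $B\in b$ with $A\le B$. $Aut_0(T_{d;G})$ is the group of bijections $\alpha$ of $T_{d;G}$ with $\alpha(a)\le\alpha(b)\iff a\le b$ and $\alpha(T_{\mu;G})=T_{\mu;G}$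 for every partition $\mu$ of $d$. *)

From HB Require Import structures.
From mathcomp Require Import all_boot all_order all_fingroup.
From mathcomp Require Import boolp.
Set Implicit Arguments.
Unset Strict Implicit.
Unset Printing Implicit Defensive.

(* The points are 'I_d = {0,...,d-1}, standing for {1,...,d}. *)

Definition is_partition (d : nat) (lam : seq nat) : bool :=
  [&& sorted geq lam, all (fun x => 0 < x) lam & sumn lam == d].

Definition is_tabloid (d : nat) (lam : seq nat) (A : seq {set 'I_d}) : bool :=
  [&& size A == size lam,
      pairwise (fun X Y : {set 'I_d} => [disjoint X & Y]) A &
      map (fun X : {set 'I_d} => #|X|) A == lam].

(* A finite universe containing all sequences of at most d subsets of 'I_d
   (every tabloid for a partition of d has at most d rows). *)
Definition tabU (d : nat) := {k : 'I_d.+1 & k.-tuple {set 'I_d}}.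

Definition toseq d (x : tabU d) : seq {set 'I_d} := tval (tagged x).

Definition shape d (x : tabU d) : seq nat := map (fun X : {set 'I_d} => #|X|) (toseq x).

Definition Tlam d (lam : seq nat) : {set tabU d} :=
  [set x | is_tabloid lam (toseq x)].

(* T_d: tabloids of some shape lam which is a partition of d
   (the only candidate shape of x is shape x). *)
Definition Td d : {set tabU d} :=
  [set x | is_tabloid (shape x) (toseq x) && is_partition d (shape x)].

Definition tact d (z : {perm 'I_d}) (x : tabU d) : tabU d :=
  Tagged (fun k : 'I_d.+1 => k.-tuple {set 'I_d})
         (map_tuple (fun X : {set 'I_d} => z @: X) (tagged x)).

Definition torbit d (G : {set {perm 'I_d}}) (x : tabU d) : {set tabU d} :=
  [set tact g x | g in G].

Definition TlamG d (G : {set {perm 'I_d}}) (lam : seq nat) : {set {set tabU d}} :=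
  [set torbit G x | x in Tlam d lam].
Definition TdG d (G : {set {perm 'I_d}}) : {set {set tabU d}} :=
  [set torbit G x | x in Td d].

(* A_1 u ... u A_i (missing rows taken empty) *)
Definition prefix_union d (A : seq {set 'I_d}) (i : nat) : {set 'I_d} :=
  \bigcup_(X <- take i A) X.

Definition tab_le d (A B : seq {set 'I_d}) : Prop :=
  forall i, 1 <= i -> prefix_union A i \subset prefix_union B i.

Definition orb_le d (a b : {set tabU d}) : Prop :=
  exists A B, [/\ A \in a, B \in b & tab_le (toseq A) (toseq B)].

Definition orbX d (G : {set {perm 'I_d}}) := {o : {set tabU d} | o \in TdG G}.

Definition orbs_of d (G : {set {perm 'I_d}}) (mu : seq nat) : {set orbX G} :=
  [set a : orbX G | val a \in TlamG G mu].

Definition is_aut0 d (G : {set {perm 'I_d}}) (al : {perm orbX G}) : Prop :=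
  (forall a b : orbX G, orb_le (val (al a)) (val (al b)) <-> orb_le (val a) (val b))
  /\ (forall mu, is_partition d mu -> al @: orbs_of G mu = orbs_of G mu).

Definition Aut0 d (G : {set {perm 'I_d}}) : {set {perm orbX G}} :=
  [set al | `[< is_aut0 al >]].

(* G = {(1), (12)(34), (13)(24), (14)(23)} <= S_4, points 1..4 as 0..3 *)
Definition p4 (k : nat) : 'I_4 := inord k.
Definition G4 : {set {perm 'I_4}} :=
  [set 1%g; (tperm (p4 0) (p4 1) * tperm (p4 2) (p4 3))%g;
            (tperm (p4 0) (p4 2) * tperm (p4 1) (p4 3))%g;
            (tperm (p4 0) (p4 3) * tperm (p4 1) (p4 2))%g].

(* Under the Klein group G, T_4 splits into 14 orbits, represented by the
   tabloids in [reps]; that these orbits exhaust T_{4;G} without repetition,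
   and how they compare, are finite checks done by computation on bit-vector
   encodings of tabloids.  The resulting orbit poset is graded by shape: an orbit lies below
   every orbit of strictly coarser shape, except that a (2,1^2)-orbit lies below
   only the (2^2)-orbit with the same first row.  A shape-preserving
   automorphism thus fixes the orbits of shapes (4) and (3,1), permutes the
   three (2^2)-orbits freely, is forced on the (2,1^2)-orbits by that matching,
   and is arbitrary on the six (1^4)-orbits, which are comparable with every
   orbit of another shape: Aut_0(T_{4;G}) = S_3 x S_6. *)

From Pilot Require Import Defs.
From HB Require Import structures.
From mathcomp Require Import all_boot all_order all_fingroup.
From mathcomp Require Import boolp.
Set Implicit Arguments. Unset Strict Implicit. Unset Printing Implicit Defensive.

Section Tabloids.

Variable d : nat.
Implicit Types (x y : tabU d) (g h : {perm 'I_d}) (s : seq {set 'I_d}).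

Definition tab_of s : tabU d :=
  Tagged (fun k : 'I_d.+1 => k.-tuple {set 'I_d})
         (insubd (nseq_tuple (inord (size s)) set0) s).

Lemma toseq_tab_of s : size s <= d -> toseq (tab_of s) = s.
Proof. by move=> sz_s; rewrite /toseq /= val_insubd inordK ?eqxx. Qed.

Lemma toseq_inj : injective (@toseq d).
Proof.
case=> [k t] [k' t']; rewrite /toseq /= => eq_tt'.
have eq_kk' : k = k' by apply: val_inj; rewrite /= -(size_tuple t) -(size_tuple t') eq_tt'.
by subst k'; congr existT; apply: val_inj.
Qed.

Lemma size_toseq x : size (toseq x) <= d.
Proof. by case: x => [k t]; rewrite /toseq /= size_tuple -ltnS ltn_ord. Qed.

Lemma toseq_tact g x : toseq (tact g x) = map (fun X : {set 'I_d} => g @: X) (toseq x).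
Proof. by case: x. Qed.

Lemma tact1 x : tact 1 x = x.
Proof.
apply: toseq_inj; rewrite toseq_tact -[RHS]map_id; apply: eq_map => X /=.
by rewrite (eq_imset _ (@perm1 _)) imset_id.
Qed.

Lemma tactM g h x : tact (g * h) x = tact h (tact g x).
Proof.
apply: toseq_inj; rewrite !toseq_tact -map_comp; apply: eq_map => X /=.
by rewrite -imset_comp; apply: eq_imset => i; rewrite permM.
Qed.

Lemma Tlam_tact lam g x : (tact g x \in Tlam d lam) = (x \in Tlam d lam).
Proof.
rewrite !inE /is_tabloid toseq_tact size_map pairwise_map -map_comp.
congr [&& _, _ & _ == lam].
  by apply: eq_pairwise => X Y; apply/imset_disjoint/perm_inj.
by apply: eq_map => X /=; apply/card_imset/perm_inj.
Qed.

Lemma Tlam_shape lam x : x \in Tlam d lam -> Defs.shape x = lam.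
Proof. by rewrite inE => /and3P [_ _ /eqP]. Qed.

Lemma Tlam_Td lam x : is_partition d lam -> x \in Tlam d lam -> x \in Td d.
Proof.
move=> lam_part Tx; rewrite inE (Tlam_shape Tx) lam_part andbT.
by move: Tx; rewrite inE.
Qed.

Lemma mem_prefix_union s i p :
  (p \in prefix_union s i) = has (fun X : {set 'I_d} => p \in X) (take i s).
Proof.
rewrite /prefix_union; elim: (take i s) => [|X s' IH]; first by rewrite big_nil inE.
by rewrite big_cons inE IH.
Qed.

Lemma tab_le_bounded x y :
  tab_le (toseq x) (toseq y) <->
  (forall i, i <= d -> prefix_union (toseq x) i \subset prefix_union (toseq y) i).
Proof.
split=> [le_xy i _|le_xy i _].
  have [->|i_gt0] := posnP i; first by rewrite /prefix_union take0 big_nil sub0set.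
  exact: le_xy.
have take_min s : size s <= d -> take i s = take (minn i d) s.
  move=> sz_s; case: leqP => // /ltnW d_le_i.
  by rewrite !take_oversize // (leq_trans sz_s).
by rewrite /prefix_union !take_min ?size_toseq //; apply/le_xy/geq_minr.
Qed.

End Tabloids.

Section Orbits.

Variables (d : nat) (G : {group {perm 'I_d}}).
Implicit Types (x y : tabU d).

Lemma torbit_refl x : x \in torbit G x.
Proof. by apply/imsetP; exists 1%g; rewrite ?tact1. Qed.

Lemma torbit_tact g x : g \in G -> torbit G (tact g x) = torbit G x.
Proof.
move=> Gg; apply/setP => y; apply/imsetP/imsetP => [[h Gh ->]|[h Gh ->]].
  by exists (g * h)%g; rewrite ?groupM ?tactM.
by exists (g^-1 * h)%g; rewrite ?groupM ?groupV // -tactM mulKVg.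
Qed.

Lemma torbit_eq x y : y \in torbit G x -> torbit G y = torbit G x.
Proof. by case/imsetP => g Gg ->; apply: torbit_tact. Qed.

Lemma torbit_TlamG lam x : (torbit G x \in TlamG G lam) = (x \in Tlam d lam).
Proof.
apply/imsetP/idP => [[y Ty eq_xy]|]; last by exists x.
have /imsetP [g _ ->] : x \in torbit G y by rewrite -eq_xy torbit_refl.
by rewrite Tlam_tact.
Qed.

Lemma Aut0_le al a b : al \in Aut0 G ->
  orb_le (val a) (val b) -> orb_le (val (al a)) (val (al b)).
Proof. by rewrite inE => /asboolP [le_al _] /le_al. Qed.

Lemma Aut0_orbs al mu : al \in Aut0 G -> is_partition d mu ->
  {in orbs_of G mu, forall a, al a \in orbs_of G mu}.
Proof.
rewrite inE => /asboolP [_ al_shape] mu_part a a_mu.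
by rewrite -(al_shape _ mu_part); apply: imset_f.
Qed.

End Orbits.

Lemma has_iota_ord n (P : pred nat) : has P (iota 0 n) = [exists i : 'I_n, P i].
Proof.
rewrite -val_enum_ord has_map.
by apply/hasP/existsP => [[i _ Pi]|[i Pi]]; exists i; rewrite ?mem_enum.
Qed.

Lemma all_iota_ord n (P : pred nat) : all P (iota 0 n) = [forall i : 'I_n, P i].
Proof.
rewrite -val_enum_ord all_map.
by apply/allP/forallP => [Pn i|Pn i _]; [apply: Pn; rewrite mem_enum | apply: Pn].
Qed.

(* Row j lists the images of the points under the j-th element of G4; since G4
   acts regularly on itself, it is also the multiplication table of G4. *)
Definition klein (j i : nat) : nat :=
  nth 0 (nth [::] [:: [:: 0; 1; 2; 3]; [:: 1; 0; 3; 2]; [:: 2; 3; 0; 1]; [:: 3; 2; 1; 0]] j) i.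

Definition kperm (j : nat) : {perm 'I_4} :=
  match j with
  | 0 => 1%g
  | 1 => (tperm (p4 0) (p4 1) * tperm (p4 2) (p4 3))%g
  | 2 => (tperm (p4 0) (p4 2) * tperm (p4 1) (p4 3))%g
  | _ => (tperm (p4 0) (p4 3) * tperm (p4 1) (p4 2))%g
  end.

Lemma p4E k (lt_k4 : k < 4) : p4 k = Ordinal lt_k4.
Proof. exact/val_inj/inordK. Qed.

Lemma kpermE j (i : 'I_4) : j < 4 -> val (kperm j i) = klein j i.
Proof.
case: j => [|[|[|[|]]]] // _; rewrite /= ?perm1 ?permM /tperm ?permE.
all: rewrite ?(p4E (isT : 0 < 4)) ?(p4E (isT : 1 < 4)) ?(p4E (isT : 2 < 4)) ?(p4E (isT : 3 < 4)).
all: by case: i => [[|[|[|[|]]]] lt_i4].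
Qed.

Lemma klein_lt j i : j < 4 -> i < 4 -> klein j i < 4.
Proof. by case: j => [|[|[|[|]]]] //; case: i => [|[|[|[|]]]]. Qed.

Lemma kleinK j i : j < 4 -> i < 4 -> klein j (klein j i) = i.
Proof. by case: j => [|[|[|[|]]]] //; case: i => [|[|[|[|]]]]. Qed.

Lemma kleinM j k i : j < 4 -> k < 4 -> i < 4 -> klein k (klein j i) = klein (klein j k) i.
Proof. by case: j => [|[|[|[|]]]] //; case: k => [|[|[|[|]]]] //; case: i => [|[|[|[|]]]]. Qed.

Lemma kpermM j k : j < 4 -> k < 4 -> (kperm j * kperm k)%g = kperm (klein j k).
Proof.
move=> lt_j4 lt_k4; apply/permP => i; apply: val_inj.
by rewrite permM /= !kpermE ?klein_lt // kleinM.
Qed.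

Lemma kpermK j : j < 4 -> involutive (kperm j).
Proof. by move=> lt_j4 i; apply: val_inj; rewrite /= !kpermE ?kleinK ?klein_lt. Qed.

Lemma G4P g : reflect (exists2 j, j < 4 & g = kperm j) (g \in G4).
Proof.
apply: (iffP idP) => [|[j lt_j4 ->]].
  by rewrite !inE -!orbA => /or4P [] /eqP ->; [exists 0 | exists 1 | exists 2 | exists 3].
by case: j lt_j4 => [|[|[|[|]]]] // _; rewrite !inE eqxx ?orbT.
Qed.

Lemma group_set_G4 : group_set G4.
Proof.
apply/group_setP; split; first by apply/G4P; exists 0.
move=> _ _ /G4P [j lt_j4 ->] /G4P [k lt_k4 ->]; apply/G4P.
by exists (klein j k); rewrite ?klein_lt ?kpermM.
Qed.

Canonical G4_group := group group_set_G4.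

Implicit Types (A B : {set 'I_4}) (x y : tabU 4).

(* Tabloids are encoded by the characteristic bit sequences of their rows, so
   that the facts about T_4 below can be checked by [vm_compute]. *)
Definition set_code (A : {set 'I_4}) : seq bool := [seq inord i \in A | i <- iota 0 4].

Definition code (x : tabU 4) : seq (seq bool) := map set_code (toseq x).

Lemma nth_set_code A (i : 'I_4) : nth false (set_code A) i = (i \in A).
Proof. by rewrite (nth_map 0) ?size_iota // nth_iota // add0n inord_val. Qed.

Lemma set_code_inj : injective set_code.
Proof. by move=> A B eq_AB; apply/setP => i; rewrite -!nth_set_code eq_AB. Qed.

Lemma code_inj : injective code.
Proof. by move=> x y /(inj_map set_code_inj) /toseq_inj. Qed.

Lemma card_set_code A : #|A| = count id (set_code A).
Proof.
rewrite count_map cardE size_filter -enumT -val_enum_ord count_map.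
by apply: eq_count => i /=; rewrite inord_val.
Qed.

Definition code_disjoint (r r' : seq bool) : bool :=
  ~~ has (fun i => nth false r i && nth false r' i) (iota 0 4).

Lemma disjoint_set_code A B : [disjoint A & B] = code_disjoint (set_code A) (set_code B).
Proof.
rewrite /code_disjoint has_iota_ord -setI_eq0; apply/eqP/existsPn => [AB0 i|nAB].
  by rewrite !nth_set_code -in_setI AB0 in_set0.
by apply/setP => i; rewrite in_setI in_set0; have := nAB i; rewrite !nth_set_code => /negbTE.
Qed.

Definition code_in_prefix (c : seq (seq bool)) (i p : nat) : bool :=
  has (fun r => nth false r p) (take i c).

Definition code_le (c c' : seq (seq bool)) : bool :=
  all (fun i => all (fun p => code_in_prefix c i p ==> code_in_prefix c' i p) (iota 0 4))
      (iota 0 5).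

Lemma mem_prefix_union_code x i (p : 'I_4) :
  (p \in prefix_union (toseq x) i) = code_in_prefix (code x) i p.
Proof.
rewrite mem_prefix_union /code_in_prefix /code -map_take has_map.
by apply: eq_has => X /=; rewrite nth_set_code.
Qed.

Lemma tab_le_code x y : tab_le (toseq x) (toseq y) <-> code_le (code x) (code y).
Proof.
rewrite tab_le_bounded; split=> [le_xy|/allP le_xy i le_i4].
  apply/allP => i; rewrite mem_iota => /le_xy /subsetP sub_xy.
  by rewrite all_iota_ord; apply/forallP => p; rewrite -!mem_prefix_union_code; apply/implyP/sub_xy.
apply/subsetP => p; rewrite !mem_prefix_union_code; apply/implyP.
have := le_xy i; rewrite mem_iota ltnS le_i4 all_iota_ord => /(_ isT) /forallP.
by apply.
Qed.

Definition code_kperm (j : nat) (r : seq bool) : seq bool :=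
  [seq nth false r (klein j i) | i <- iota 0 4].

Lemma set_code_kperm j A : j < 4 -> set_code (kperm j @: A) = code_kperm j (set_code A).
Proof.
move=> lt_j4; apply/eq_in_map => i; rewrite mem_iota => /= lt_i4.
rewrite -[klein j i](@inordK 3) ?klein_lt // nth_set_code.
rewrite -{1}[inord i](kpermK lt_j4) mem_imset; last exact: perm_inj.
by congr (_ \in A); apply: val_inj; rewrite /= kpermE // !inordK ?klein_lt.
Qed.

Lemma code_tact j x : j < 4 -> code (tact (kperm j) x) = map (code_kperm j) (code x).
Proof.
move=> lt_j4; rewrite /code toseq_tact -!map_comp.
by apply: eq_map => X /=; rewrite set_code_kperm.
Qed.

Definition code_shape (c : seq (seq bool)) : seq nat := map (count id) c.

Definition code_tabloid (lam : seq nat) (c : seq (seq bool)) : bool :=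
  [&& size c == size lam, pairwise code_disjoint c & code_shape c == lam].

Definition code_Td (c : seq (seq bool)) : bool :=
  code_tabloid (code_shape c) c && is_partition 4 (code_shape c).

Lemma shape_code x : Defs.shape x = code_shape (code x).
Proof.
rewrite /Defs.shape /code_shape /code -map_comp.
by apply/eq_map => X /=; rewrite card_set_code.
Qed.

Lemma Tlam_code lam x : (x \in Tlam 4 lam) = code_tabloid lam (code x).
Proof.
rewrite inE /is_tabloid /code_tabloid /code size_map pairwise_map -/(Defs.shape x) shape_code.
by congr [&& _, _ & _]; apply: eq_pairwise => X Y; rewrite disjoint_set_code.
Qed.

Lemma Td_code x : (x \in Td 4) = code_Td (code x).
Proof.
by rewrite inE; have := Tlam_code (Defs.shape x) x; rewrite inE => ->; rewrite shape_code.
Qed.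

Fixpoint words (T : Type) (U : seq T) (k : nat) : seq (seq T) :=
  (* The [let] shares the recursive call, keeping the enumeration linear. *)
  if k is k'.+1 then let w := words U k' in flatten [seq map (cons u) w | u <- U]
  else [:: [::]].

Lemma mem_words (T : eqType) (U : seq T) s : all (mem U) s -> s \in words U (size s).
Proof.
elim: s => [|u s IHs] /=; first by rewrite inE.
by case/andP => Uu /IHs Us; apply/flatten_mapP; exists u; rewrite ?map_f.
Qed.

Definition all_codes : seq (seq (seq bool)) :=
  flatten [seq words (words [:: false; true] 4) k | k <- iota 0 5].

Lemma code_in_all_codes x : code x \in all_codes.
Proof.
apply/flatten_mapP; exists (size (code x)); first by rewrite mem_iota size_map ltnS size_toseq.
apply/mem_words/allP => _ /mapP [X _ ->].
by rewrite -[4](size_map (fun i => inord i \in X) (iota 0 4)); apply/mem_words/allP => -[].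
Qed.

Definition label := (unit + unit + 'I_3 + 'I_3 + 'I_6)%type.

Notation L4 := (inl (inl (inl (inl tt)))).
Notation L31 := (inl (inl (inl (inr tt)))).
Notation L22 k := (inl (inl (inr k))).
Notation L211 k := (inl (inr k)).
Notation L1111 k := (inr k).

Definition lab_rank (e : label) : nat :=
  match e with L4 => 0 | L31 => 1 | L22 _ => 2 | L211 _ => 3 | L1111 _ => 4 end.

Definition lab_shape (e : label) : seq nat :=
  nth [::] [:: [:: 4]; [:: 3; 1]; [:: 2; 2]; [:: 2; 1; 1]; [:: 1; 1; 1; 1]] (lab_rank e).

(* Ranks increase as shapes get finer, and finer orbits lie lower. *)
Definition lab_le (e e' : label) : bool :=
  match e, e' with
  | L211 k, L22 k' => k == k'
  | _, _ => (e == e') || (lab_rank e' < lab_rank e)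
  end.

Lemma lab_shape_partition e : is_partition 4 (lab_shape e).
Proof. by case: e => [[[[[]|[]]|k]|k]|k]. Qed.

Lemma lab_shape4 e : lab_shape e = [:: 4] -> e = L4.
Proof. by case: e => [[[[[]|[]]|k]|k]|k]. Qed.

Lemma lab_shape31 e : lab_shape e = [:: 3; 1] -> e = L31.
Proof. by case: e => [[[[[]|[]]|k]|k]|k]. Qed.

Lemma lab_shape22 e : lab_shape e = [:: 2; 2] -> exists k, e = L22 k.
Proof. by case: e => [[[[[]|[]]|k]|k]|k] // _; exists k. Qed.

Lemma lab_shape211 e : lab_shape e = [:: 2; 1; 1] -> exists k, e = L211 k.
Proof. by case: e => [[[[[]|[]]|k]|k]|k] // _; exists k. Qed.

Lemma lab_shape1111 e : lab_shape e = [:: 1; 1; 1; 1] -> exists k, e = L1111 k.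
Proof. by case: e => [[[[[]|[]]|k]|k]|k] // _; exists k. Qed.

Definition lab_aut (h : label -> label) : Prop :=
  (forall e, lab_shape (h e) = lab_shape e) /\ (forall e e', lab_le (h e) (h e') = lab_le e e').

Definition lab_extend (s : 'I_3 -> 'I_3) (t : 'I_6 -> 'I_6) (e : label) : label :=
  match e with
  | L22 k => L22 (s k) | L211 k => L211 (s k) | L1111 k => L1111 (t k) | _ => e
  end.

Lemma lab_extend_inj s t : injective s -> injective t -> injective (lab_extend s t).
Proof.
move=> s_inj t_inj [[[[[]|[]]|k]|k]|k] [[[[[]|[]]|k']|k']|k'] //= [].
- by move/s_inj ->.
- by move/s_inj ->.
- by move/t_inj ->.
Qed.

Lemma lab_extendM (s s' : {perm 'I_3}) (t t' : {perm 'I_6}) e :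
  lab_extend (s * s')%g (t * t')%g e = lab_extend s' t' (lab_extend s t e).
Proof. by case: e => [[[[[]|[]]|k]|k]|k]; rewrite /= ?permM. Qed.

Lemma lab_aut_extend s t : injective s -> injective t -> lab_aut (lab_extend s t).
Proof.
move=> s_inj t_inj; split=> [|e e']; first by case=> [[[[[]|[]]|k]|k]|k].
move: (inj_eq (lab_extend_inj s_inj t_inj) e e').
by case: e => [[[[[]|[]]|k]|k]|k]; case: e' => [[[[[]|[]]|k']|k']|k'] /= eq_ext;
   rewrite ?eq_ext ?(inj_eq s_inj).
Qed.

Lemma lab_aut_L211 h k k' : lab_aut h -> h (L22 k) = L22 k' -> h (L211 k) = L211 k'.
Proof.
case=> h_shape h_le hk; have [k1 hk1] := lab_shape211 (h_shape (L211 k)).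
by have := h_le (L211 k) (L22 k); rewrite hk hk1 /= eqxx => /eqP ->.
Qed.

Lemma lab_aut_eq h h' : lab_aut h -> lab_aut h' ->
  (forall k, h (L22 k) = h' (L22 k)) -> (forall k, h (L1111 k) = h' (L1111 k)) -> h =1 h'.
Proof.
move=> aut_h aut_h' eq22 eq1111 [[[[[]|[]]|k]|k]|k]; rewrite ?eq22 ?eq1111 //.
- by rewrite (lab_shape4 (aut_h.1 L4)) (lab_shape4 (aut_h'.1 L4)).
- by rewrite (lab_shape31 (aut_h.1 L31)) (lab_shape31 (aut_h'.1 L31)).
have [k' hk] := lab_shape22 (aut_h.1 (L22 k)).
by rewrite (lab_aut_L211 aut_h hk) (lab_aut_L211 aut_h' (etrans (esym (eq22 k)) hk)).
Qed.

Lemma lab_extend_exists (h : label -> label) :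
  (forall k, lab_shape (h (L22 k)) = [:: 2; 2]) -> injective (fun k : 'I_3 => h (L22 k)) ->
  (forall k, lab_shape (h (L1111 k)) = [:: 1; 1; 1; 1]) ->
  injective (fun k : 'I_6 => h (L1111 k)) ->
  exists (s : {perm 'I_3}) (t : {perm 'I_6}),
    (forall k, h (L22 k) = L22 (s k)) /\ (forall k, h (L1111 k) = L1111 (t k)).
Proof.
move=> shape22 inj22 shape1111 inj1111.
pose s k := if h (L22 k) is L22 k' then k' else k.
pose t k := if h (L1111 k) is L1111 k' then k' else k.
have hs k : h (L22 k) = L22 (s k) by rewrite /s; have [k' ->] := lab_shape22 (shape22 k).
have ht k : h (L1111 k) = L1111 (t k) by rewrite /t; have [k' ->] := lab_shape1111 (shape1111 k).
have s_inj : injective s by move=> k k' eq_s; apply: inj22; rewrite /= !hs eq_s.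
have t_inj : injective t by move=> k k' eq_t; apply: inj1111; rewrite /= !ht eq_t.
by exists (perm s_inj), (perm t_inj); split=> k; rewrite permE.
Qed.

Definition lab_index (e : label) : nat :=
  match e with L4 => 0 | L31 => 1 | L22 k => 2 + k | L211 k => 5 + k | L1111 k => 8 + k end.

(* Unlike [inord], whose [insub] is opaque, [ord_mod] computes under [vm_compute]. *)
Definition ord_mod n k : 'I_n.+1 := Ordinal (ltn_pmod k (ltn0Sn n)).

Definition lab_of_index (n : nat) : label :=
  if n == 0 then L4 else if n == 1 then L31 else if n < 5 then L22 (ord_mod 2 (n - 2))
  else if n < 8 then L211 (ord_mod 2 (n - 5)) else L1111 (ord_mod 5 (n - 8)).

Lemma lab_indexK : cancel lab_index lab_of_index.
Proof.
have ord_modK n (k : 'I_n.+1) : ord_mod n k = k by apply/val_inj/modn_small.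
case=> [[[[[]|[]]|k]|k]|k] //; rewrite /lab_of_index /= addKn ord_modK //.
  by rewrite -[5]/(2 + 3) ltn_add2l ltn_ord.
by rewrite -[8]/(5 + 3) ltn_add2l ltn_ord.
Qed.

Lemma lab_of_indexK n : n < 14 -> lab_index (lab_of_index n) = n.
Proof.
have /allP idx_ok : all (fun n => lab_index (lab_of_index n) == n) (iota 0 14) by vm_compute.
by move=> lt_n14; apply/eqP/idx_ok; rewrite mem_iota.
Qed.

Lemma lab_index_in e : lab_index e \in iota 0 14.
Proof.
rewrite mem_iota; case: e => [[[[[]|[]]|k]|k]|k] //.
all: by case: k => [[|[|[|[|[|[|n]]]]]] lt_n].
Qed.

(* Representatives, as lists of rows; those with indices 2 + k and 5 + k, i.e.
   labelled L22 k and L211 k, share the first row {0, k.+1}. *)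
Definition reps : seq (seq (seq nat)) := [::
  [:: [:: 0; 1; 2; 3]];
  [:: [:: 0; 1; 2]; [:: 3]];
  [:: [:: 0; 1]; [:: 2; 3]]; [:: [:: 0; 2]; [:: 1; 3]]; [:: [:: 0; 3]; [:: 1; 2]];
  [:: [:: 0; 1]; [:: 2]; [:: 3]]; [:: [:: 0; 2]; [:: 1]; [:: 3]]; [:: [:: 0; 3]; [:: 1]; [:: 2]];
  [:: [:: 0]; [:: 1]; [:: 2]; [:: 3]]; [:: [:: 0]; [:: 1]; [:: 3]; [:: 2]];
  [:: [:: 0]; [:: 2]; [:: 1]; [:: 3]]; [:: [:: 0]; [:: 2]; [:: 3]; [:: 1]];
  [:: [:: 0]; [:: 3]; [:: 1]; [:: 2]]; [:: [:: 0]; [:: 3]; [:: 2]; [:: 1]]].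

Definition row_code (r : seq nat) : seq bool := [seq i \in r | i <- iota 0 4].

Definition rep_code (n : nat) : seq (seq bool) := map row_code (nth [::] reps n).

Definition orbit_codes (c : seq (seq bool)) : seq (seq (seq bool)) :=
  [seq map (code_kperm j) c | j <- iota 0 4].

Lemma reps_size : all (fun n => size (nth [::] reps n) <= 4) (iota 0 14).
Proof. by []. Qed.

Lemma reps_tabloid :
  all (fun n => code_tabloid (lab_shape (lab_of_index n)) (rep_code n)) (iota 0 14).
Proof. by vm_compute. Qed.

Lemma reps_cover :
  all (fun c => has (fun n => c \in orbit_codes (rep_code n)) (iota 0 14))
      [seq c <- all_codes | code_Td c].
Proof. by vm_compute. Qed.

Lemma reps_separated :
  all (fun n => all (fun m => (rep_code m \in orbit_codes (rep_code n)) ==> (n == m)) (iota 0 14))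
      (iota 0 14).
Proof. by vm_compute. Qed.

Lemma reps_le :
  all (fun n => all (fun m =>
        has (fun c => has (code_le c) (orbit_codes (rep_code m))) (orbit_codes (rep_code n))
        == lab_le (lab_of_index n) (lab_of_index m)) (iota 0 14)) (iota 0 14).
Proof. by vm_compute. Qed.

Definition rep (e : label) : tabU 4 :=
  tab_of (map (fun r => [set i : 'I_4 | val i \in r]) (nth [::] reps (lab_index e))).

Lemma code_rep e : code (rep e) = rep_code (lab_index e).
Proof.
have sz_e := allP reps_size _ (lab_index_in e).
rewrite /code /rep toseq_tab_of ?size_map // -map_comp; apply: eq_map => r /=.
by apply/eq_in_map => i; rewrite mem_iota => /= lt_i4; rewrite inE inordK.
Qed.

Lemma rep_Tlam e : rep e \in Tlam 4 (lab_shape e).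
Proof.
rewrite Tlam_code code_rep -{1}(lab_indexK e).
exact: (allP reps_tabloid _ (lab_index_in e)).
Qed.

Lemma rep_Td e : rep e \in Td 4.
Proof.
have := rep_Tlam e; rewrite inE => tab_e.
by rewrite inE (Tlam_shape (rep_Tlam e)) tab_e lab_shape_partition.
Qed.

Definition orbit_of (e : label) : {set tabU 4} := torbit G4 (rep e).

Lemma orbit_ofP x e :
  reflect (exists2 j, j < 4 & x = tact (kperm j) (rep e)) (x \in orbit_of e).
Proof.
apply: (iffP imsetP) => [[g /G4P [j lt_j4 ->] ->]|[j lt_j4 ->]]; first by exists j.
by exists (kperm j) => //; apply/G4P; exists j.
Qed.

Lemma orbit_codes_rep e c : c \in orbit_codes (rep_code (lab_index e)) ->
  exists2 x, x \in orbit_of e & code x = c.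
Proof.
case/mapP => j; rewrite mem_iota => lt_j4 ->.
by exists (tact (kperm j) (rep e)); [apply/orbit_ofP; exists j | rewrite code_tact // code_rep].
Qed.

Lemma code_in_orbit_codes x e :
  x \in orbit_of e -> code x \in orbit_codes (rep_code (lab_index e)).
Proof.
case/orbit_ofP => j lt_j4 ->; rewrite code_tact // code_rep.
by apply/mapP; exists j; rewrite ?mem_iota.
Qed.

Lemma Td_orbit_of x : x \in Td 4 -> exists e, x \in orbit_of e.
Proof.
rewrite Td_code => Td_x.
have /hasP [n] : has (fun n => code x \in orbit_codes (rep_code n)) (iota 0 14).
  by apply: (allP reps_cover); rewrite mem_filter Td_x code_in_all_codes.
rewrite mem_iota /= => lt_n14; rewrite -(lab_of_indexK lt_n14).
by case/orbit_codes_rep => y y_n /code_inj <-; exists (lab_of_index n).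
Qed.

Lemma orbit_of_inj : injective orbit_of.
Proof.
move=> e e' eq_ee'; apply: (can_inj lab_indexK); apply/eqP.
have /allP/(_ _ (lab_index_in e')) := allP reps_separated _ (lab_index_in e).
rewrite -code_rep => /implyP; apply; apply: code_in_orbit_codes.
by rewrite eq_ee'; apply: torbit_refl.
Qed.

Lemma orb_le_orbit_of e e' : orb_le (orbit_of e) (orbit_of e') <-> lab_le e e'.
Proof.
have /allP/(_ _ (lab_index_in e')) := allP reps_le _ (lab_index_in e).
rewrite !lab_indexK => /eqP <-; split.
  case=> x [y [x_e y_e' /tab_le_code le_xy]]; apply/hasP; exists (code x).
    exact: code_in_orbit_codes.
  by apply/hasP; exists (code y); rewrite ?code_in_orbit_codes.
case/hasP => _ /orbit_codes_rep [x x_e <-] /hasP [_ /orbit_codes_rep [y y_e' <-]] le_xy.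
by exists x, y; split=> //; apply/tab_le_code.
Qed.

Lemma orbit_of_TlamG e lam : (orbit_of e \in TlamG G4 lam) = (lab_shape e == lam).
Proof.
rewrite torbit_TlamG; apply/idP/eqP => [/Tlam_shape <-|<-]; last exact: rep_Tlam.
by rewrite (Tlam_shape (rep_Tlam e)).
Qed.

Lemma TlamG_label mu : is_partition 4 mu ->
  TlamG G4 mu = orbit_of @: [set e | lab_shape e == mu].
Proof.
move=> mu_part; apply/setP => o; apply/idP/imsetP => [TGo|[e]]; last first.
  by rewrite inE => e_mu ->; rewrite orbit_of_TlamG.
have /imsetP [x /(Tlam_Td mu_part) /Td_orbit_of [e x_e] def_o] := TGo.
have o_e : o = orbit_of e.
  by rewrite def_o; apply: torbit_eq.
by exists e; rewrite // inE -orbit_of_TlamG -o_e.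
Qed.

Lemma orbit_of_TdG e : orbit_of e \in TdG G4.
Proof. exact/imset_f/rep_Td. Qed.

Definition orb_of (e : label) : orbX G4 := exist _ (orbit_of e) (orbit_of_TdG e).

Lemma orb_of_inj : injective orb_of.
Proof. by move=> e e' /(congr1 val) /orbit_of_inj. Qed.

Lemma orb_of_onto (a : orbX G4) : exists e, a = orb_of e.
Proof.
case: a => o TdG_o; have /imsetP [x /Td_orbit_of [e x_e] def_o] := TdG_o.
by exists e; apply: val_inj; rewrite /= def_o; apply: torbit_eq.
Qed.

Definition label_of (a : orbX G4) : label := odflt L4 [pick e | orb_of e == a].

Lemma label_ofK : cancel label_of orb_of.
Proof.
move=> a; rewrite /label_of; case: pickP => [e /eqP <- //|no_e].
by have [e def_a] := orb_of_onto a; have := no_e e; rewrite def_a eqxx.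
Qed.

Lemma orb_ofK : cancel orb_of label_of.
Proof. by move=> e; apply: orb_of_inj; rewrite label_ofK. Qed.

Lemma orbs_of_orb_of mu e : (orb_of e \in orbs_of G4 mu) = (lab_shape e == mu).
Proof. by rewrite inE orbit_of_TlamG. Qed.

Lemma orbs_of_label mu a : (a \in orbs_of G4 mu) = (lab_shape (label_of a) == mu).
Proof. by rewrite -{1}(label_ofK a) orbs_of_orb_of. Qed.

Lemma orb_le_orb_of e e' : orb_le (val (orb_of e)) (val (orb_of e')) <-> lab_le e e'.
Proof. exact: orb_le_orbit_of. Qed.

Definition lab_conj (al : {perm orbX G4}) (e : label) : label := label_of (al (orb_of e)).

Lemma orb_of_conj al e : orb_of (lab_conj al e) = al (orb_of e).
Proof. exact: label_ofK. Qed.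

Lemma Aut0_lab_aut al : al \in Aut0 G4 <-> lab_aut (lab_conj al).
Proof.
rewrite inE; split=> [/asboolP [al_le al_shape]|[h_shape h_le]].
  split=> [e|e e'].
    apply/eqP; rewrite -orbs_of_label -(al_shape _ (lab_shape_partition e)).
    by rewrite mem_imset ?orbs_of_orb_of //; apply: perm_inj.
  have := al_le (orb_of e) (orb_of e'); rewrite -!orb_of_conj !orb_le_orb_of.
  by move=> le_iff; apply/idP/idP => /le_iff.
apply/asboolP; split=> [a b|mu _].
  have [[e ->] [e' ->]] := (orb_of_onto a, orb_of_onto b).
  rewrite -!orb_of_conj; split=> /orb_le_orb_of le_ee'; apply/orb_le_orb_of.
    by rewrite -h_le.
  by rewrite h_le.
apply/eqP; rewrite eqEcard card_imset ?leqnn ?andbT; last exact: perm_inj.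
apply/subsetP => _ /imsetP [a a_mu ->].
by rewrite -(label_ofK a) -orb_of_conj orbs_of_orb_of h_shape -orbs_of_label.
Qed.

Definition aut_of_fun (st : {perm 'I_3} * {perm 'I_6}) (a : orbX G4) : orbX G4 :=
  orb_of (lab_extend st.1 st.2 (label_of a)).

Lemma aut_of_fun_inj st : injective (aut_of_fun st).
Proof.
apply/inj_comp/inj_comp; first exact: orb_of_inj; last exact: can_inj label_ofK.
exact: lab_extend_inj (@perm_inj _ st.1) (@perm_inj _ st.2).
Qed.

Definition aut_of st : {perm orbX G4} := perm (@aut_of_fun_inj st).

Lemma aut_ofE st e : aut_of st (orb_of e) = orb_of (lab_extend st.1 st.2 e).
Proof. by rewrite permE /aut_of_fun orb_ofK. Qed.

Lemma aut_of_Aut0 st : aut_of st \in Aut0 G4.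
Proof.
apply/Aut0_lab_aut; have conjE e : lab_conj (aut_of st) e = lab_extend st.1 st.2 e.
  by rewrite /lab_conj aut_ofE orb_ofK.
have [ext_shape ext_le] := lab_aut_extend (@perm_inj _ st.1) (@perm_inj _ st.2).
by split=> *; rewrite !conjE.
Qed.

Lemma Aut0_eq al al' : al \in Aut0 G4 -> al' \in Aut0 G4 ->
  {in orbs_of G4 [:: 2; 2] :|: orbs_of G4 [:: 1; 1; 1; 1], al =1 al'} -> al = al'.
Proof.
move=> /Aut0_lab_aut aut_al /Aut0_lab_aut aut_al' eq_al.
have eq_conj : lab_conj al =1 lab_conj al'.
  apply: lab_aut_eq aut_al aut_al' _ _ => k; rewrite /lab_conj eq_al //.
    by rewrite inE orbs_of_orb_of.
  by rewrite inE !orbs_of_orb_of orbT.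
by apply/permP => a; have [e ->] := orb_of_onto a; rewrite -!orb_of_conj eq_conj.
Qed.

Lemma aut_of_agree (f : orbX G4 -> orbX G4) :
  {in orbs_of G4 [:: 2; 2], forall a, f a \in orbs_of G4 [:: 2; 2]} ->
  {in orbs_of G4 [:: 2; 2] &, injective f} ->
  {in orbs_of G4 [:: 1; 1; 1; 1], forall a, f a \in orbs_of G4 [:: 1; 1; 1; 1]} ->
  {in orbs_of G4 [:: 1; 1; 1; 1] &, injective f} ->
  exists st, {in orbs_of G4 [:: 2; 2] :|: orbs_of G4 [:: 1; 1; 1; 1], f =1 aut_of st}.
Proof.
move=> f22 inj22 f1111 inj1111; pose h e := label_of (f (orb_of e)).
have shape_h mu : {in orbs_of G4 mu, forall a, f a \in orbs_of G4 mu} ->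
    forall e, lab_shape e == mu -> lab_shape (h e) = mu.
  by move=> f_mu e e_mu; apply/eqP; rewrite -orbs_of_label f_mu ?orbs_of_orb_of.
have inj_h mu : {in orbs_of G4 mu &, injective f} ->
    forall e e', lab_shape e == mu -> lab_shape e' == mu -> h e = h e' -> e = e'.
  move=> inj_mu e e' e_mu e'_mu /(can_inj label_ofK) /inj_mu eq_ee'.
  by apply/orb_of_inj/eq_ee'; rewrite orbs_of_orb_of.
have [s [t [hs ht]]] : exists (s : {perm 'I_3}) (t : {perm 'I_6}),
    (forall k, h (L22 k) = L22 (s k)) /\ (forall k, h (L1111 k) = L1111 (t k)).
  apply: lab_extend_exists => [k|k k'|k|k k'].
  - exact: shape_h f22 (L22 k) isT.
  - by move/(inj_h _ inj22 (L22 k) (L22 k') isT isT) => [].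
  - exact: shape_h f1111 (L1111 k) isT.
  - by move/(inj_h _ inj1111 (L1111 k) (L1111 k') isT isT) => [].
exists (s, t) => a; have [e ->] := orb_of_onto a.
rewrite inE !orbs_of_orb_of => /orP [/eqP/lab_shape22 [k ->]|/eqP/lab_shape1111 [k ->]].
  by rewrite aut_ofE /= -hs label_ofK.
by rewrite aut_ofE /= -ht label_ofK.
Qed.

Lemma Aut0_aut_of al : al \in Aut0 G4 -> exists st, al = aut_of st.
Proof.
move=> Aut0_al; have [st al_st] := aut_of_agree
  (Aut0_orbs (mu := [:: 2; 2]) Aut0_al isT) (in2W (@perm_inj _ al))
  (Aut0_orbs (mu := [:: 1; 1; 1; 1]) Aut0_al isT) (in2W (@perm_inj _ al)).
by exists st; apply: Aut0_eq (aut_of_Aut0 st) al_st.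
Qed.

Lemma aut_ofM :
  {in [set: {perm 'I_3} * {perm 'I_6}] &, {morph aut_of : st st' / (st * st')%g}}.
Proof.
move=> [s t] [s' t'] _ _; apply/permP => a; have [e ->] := orb_of_onto a.
by rewrite permM !aut_ofE /= lab_extendM.
Qed.

Lemma aut_of_inj : injective aut_of.
Proof.
move=> [s t] [s' t'] eq_st.
have eq_e e := congr1 (fun al : {perm orbX G4} => al (orb_of e)) eq_st.
congr pair; apply/permP => k.
  by have := eq_e (L22 k); rewrite /= !aut_ofE => /orb_of_inj [].
by have := eq_e (L1111 k); rewrite /= !aut_ofE => /orb_of_inj [].
Qed.

Lemma Aut0_isog : (Aut0 G4 \isog [set: {perm 'I_3} * {perm 'I_6}])%g.
Proof.
pose m := Morphism aut_ofM.
have im_m : (m @* [set: {perm 'I_3} * {perm 'I_6}])%g = Aut0 G4.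
  rewrite morphimEdom; apply/setP => al.
  apply/imsetP/idP => [[st _ ->]|/Aut0_aut_of [st ->]]; first exact: aut_of_Aut0.
  by exists st; rewrite ?inE.
rewrite -im_m isog_sym sub_isog //; apply/injmP => st st' _ _; exact: aut_of_inj.
Qed.

Lemma Aut0_unique_extension (f : orbX G4 -> orbX G4) :
  {in orbs_of G4 [:: 2; 2], forall a, f a \in orbs_of G4 [:: 2; 2]} ->
  {in orbs_of G4 [:: 2; 2] &, injective f} ->
  {in orbs_of G4 [:: 1; 1; 1; 1], forall a, f a \in orbs_of G4 [:: 1; 1; 1; 1]} ->
  {in orbs_of G4 [:: 1; 1; 1; 1] &, injective f} ->
  exists! al, al \in Aut0 G4 /\
    {in orbs_of G4 [:: 2; 2] :|: orbs_of G4 [:: 1; 1; 1; 1], forall a, al a = f a}.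
Proof.
move=> f22 inj22 f1111 inj1111; have [st f_st] := aut_of_agree f22 inj22 f1111 inj1111.
exists (aut_of st); split=> [|al [Aut0_al al_f]].
  by split=> [|a /f_st]; rewrite ?aut_of_Aut0.
by apply: Aut0_eq (aut_of_Aut0 st) Aut0_al _ => a a_in; rewrite -f_st ?al_f.
Qed.

Lemma card_TlamG n (f : 'I_n -> label) mu : is_partition 4 mu -> injective f ->
  (forall e, lab_shape e = mu <-> exists k, e = f k) -> #|TlamG G4 mu| = n.
Proof.
move=> mu_part f_inj shape_f; rewrite TlamG_label // card_imset; last exact: orbit_of_inj.
have -> : [set e | lab_shape e == mu] = f @: setT.
  apply/setP => e; rewrite inE.
  by apply/eqP/imsetP => [/shape_f [k ->]|[k _ ->]]; [exists k | apply/shape_f; exists k].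
by rewrite card_imset // cardsT card_ord.
Qed.

Lemma TlamG_cards :
  [/\ #|TlamG G4 [:: 4]| = 1, #|TlamG G4 [:: 3; 1]| = 1,
      #|TlamG G4 [:: 2; 2]| = 3, #|TlamG G4 [:: 2; 1; 1]| = 3
    & #|TlamG G4 [:: 1; 1; 1; 1]| = 6].
Proof.
have one_inj (e0 : label) : injective (fun _ : 'I_1 => e0) by move=> k k' _; rewrite !ord1.
split.
- apply: (card_TlamG (f := fun _ => L4)) => // e.
  by split=> [/lab_shape4 ->|[_ ->]]; first exists ord0.
- apply: (card_TlamG (f := fun _ => L31)) => // e.
  by split=> [/lab_shape31 ->|[_ ->]]; first exists ord0.
- apply: (card_TlamG (f := fun k => L22 k)) => [//|k k' []//|e].
  by split=> [/lab_shape22|[k ->]].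
- apply: (card_TlamG (f := fun k => L211 k)) => [//|k k' []//|e].
  by split=> [/lab_shape211|[k ->]].
- apply: (card_TlamG (f := fun k => L1111 k)) => [//|k k' []//|e].
  by split=> [/lab_shape1111|[k ->]].
Qed.

Lemma TlamG22_unique_below a : a \in TlamG G4 [:: 2; 2] ->
  exists! b, b \in TlamG G4 [:: 2; 1; 1] /\ orb_le b a.
Proof.
rewrite TlamG_label // => /imsetP [_ /[!inE] /eqP/lab_shape22 [k ->] ->].
exists (orbit_of (L211 k)); split=> [|b []].
  by rewrite orbit_of_TlamG; split=> //; apply/orb_le_orbit_of => /=.
rewrite TlamG_label // => /imsetP [_ /[!inE] /eqP/lab_shape211 [k' ->] ->].
by move/orb_le_orbit_of => /= /eqP ->.
Qed.

Lemma TlamG211_unique_above b : b \in TlamG G4 [:: 2; 1; 1] ->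
  exists! a, a \in TlamG G4 [:: 2; 2] /\ orb_le b a.
Proof.
rewrite TlamG_label // => /imsetP [_ /[!inE] /eqP/lab_shape211 [k ->] ->].
exists (orbit_of (L22 k)); split=> [|a []].
  by rewrite orbit_of_TlamG; split=> //; apply/orb_le_orbit_of => /=.
rewrite TlamG_label // => /imsetP [_ /[!inE] /eqP/lab_shape22 [k' ->] ->].
by move/orb_le_orbit_of => /= /eqP ->.
Qed.

Theorem theorem10p1p1 :
  [/\ #|TlamG G4 [:: 4]| = 1, #|TlamG G4 [:: 3; 1]| = 1,
      #|TlamG G4 [:: 2; 2]| = 3, #|TlamG G4 [:: 2; 1; 1]| = 3
    & #|TlamG G4 [:: 1; 1; 1; 1]| = 6]
  /\ (* each (2^2)-orbit lies above exactly one (2,1^2)-orbit, and conversely *)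
  (forall a, a \in TlamG G4 [:: 2; 2] ->
     exists! b, b \in TlamG G4 [:: 2; 1; 1] /\ orb_le b a)
  /\ (forall b, b \in TlamG G4 [:: 2; 1; 1] ->
     exists! a, a \in TlamG G4 [:: 2; 2] /\ orb_le b a)
  /\ (* automorphisms permute the (2^2)-orbits and correspondingly the (2,1^2)-orbits *)
  (forall al, al \in Aut0 G4 ->
     forall a b : orbX G4, a \in orbs_of G4 [:: 2; 2] -> b \in orbs_of G4 [:: 2; 1; 1] ->
       orb_le (val b) (val a) -> orb_le (val (al b)) (val (al a)))
  /\ (* Aut_0 = (simultaneous perms of T_(2^2), T_(2,1^2)) x (all perms of T_(1^4)) *)
  (forall f : orbX G4 -> orbX G4,
     {in orbs_of G4 [:: 2; 2], forall a, f a \in orbs_of G4 [:: 2; 2]} ->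
     {in orbs_of G4 [:: 2; 2] &, injective f} ->
     {in orbs_of G4 [:: 1; 1; 1; 1], forall a, f a \in orbs_of G4 [:: 1; 1; 1; 1]} ->
     {in orbs_of G4 [:: 1; 1; 1; 1] &, injective f} ->
     exists! al, al \in Aut0 G4 /\
       {in orbs_of G4 [:: 2; 2] :|: orbs_of G4 [:: 1; 1; 1; 1], forall a, al a = f a})
  /\ (Aut0 G4 \isog [set: {perm 'I_3} * {perm 'I_6}])%g.
Proof.
split; first exact: TlamG_cards.
split; first exact: TlamG22_unique_below.
split; first exact: TlamG211_unique_above.
split; first by move=> al Aut0_al a b _ _; apply: Aut0_le.
split; first exact: Aut0_unique_extension.
exact: Aut0_isog.
Qed.
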